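(* Let $K$ be an arbitrary field, let $V_1,\dots,V_m$ and $V$ be $K$-vector spaces, and let $f\colon \prod_{i=1}^m V_i\to V$ be a multilinear map (linear in each argument separately). If $\operatorname{Im} f$ contains two vectors that are not proportional, then $\operatorname{Im} f$ contains a $2$-dimensional linear subspace of $V$. In particular, if $\dim V=2$ then $\operatorname{Im} f=V$. *)

From HB Require Import structures.
From mathcomp Require Import all_boot all_order all_algebra.
Set Implicit Arguments. Unset Strict Implicit. Unset Printing Implicit Defensive.
Import GRing.Theory.
Local Open Scope ring_scope.

Definition multilinear (K : fieldType) (m : nat) (Vs : 'I_m -> lmodType K)
    (V : lmodType K) (f : (forall i, Vs i) -> V) : Prop :=
  forall (x : forall i, Vs i) (i : 'I_m) (a : K) (u v : Vs i),
    f (dfwith x (a *: u + v)) = a *: f (dfwith x u) + f (dfwith x v).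

Definition in_image (K : fieldType) (m : nat) (Vs : 'I_m -> lmodType K)
    (V : lmodType K) (f : (forall i, Vs i) -> V) (v : V) : Prop :=
  exists x, f x = v.

Definition proportional (K : fieldType) (V : lmodType K) (u w : V) : Prop :=
  (exists a : K, u = a *: w) \/ (exists a : K, w = a *: u).

Definition lin_indep2 (K : fieldType) (V : lmodType K) (u w : V) : Prop :=
  forall a b : K, a *: u + b *: w = 0 -> a = 0 /\ b = 0.

Definition contains_2dim_subspace (K : fieldType) (m : nat)
    (Vs : 'I_m -> lmodType K) (V : lmodType K) (f : (forall i, Vs i) -> V)
    : Prop :=
  exists u w : V, lin_indep2 u w /\
    forall a b : K, in_image f (a *: u + b *: w).

(* Induct on the number of coordinates in which two points x, y with
   non-proportional images differ.  Pick such a coordinate i and let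
   x' = x[i := y_i], y' = y[i := x_i].  If f x and f x' are not proportional,
   the linear map u |-> f (x[i := u]) already has a 2-dimensional subspace in
   its image; if f x' and f y are not proportional, the pair (x', y) differs in
   fewer coordinates.  Otherwise f x' is proportional to two non-proportional
   vectors, hence 0, and likewise f y' = 0; then by linearity in slot i the
   points x[i := x_i + y_i] and y[i := x_i + y_i] have images f x and f y and
   differ in fewer coordinates. *)

From HB Require Import structures.
From mathcomp Require Import all_boot all_order all_algebra.
From Stdlib Require Import Classical FunctionalExtensionality.
Set Implicit Arguments. Unset Strict Implicit.
Import GRing.Theory.
Local Open Scope ring_scope.

Section Proportional.
Variables (K : fieldType) (V : lmodType K).
Implicit Types u v w : V.

Lemma proportional_refl v : proportional v v.
Proof. by left; exists 1; rewrite scale1r. Qed.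

Lemma proportional_sym u w : proportional u w -> proportional w u.
Proof. by case=> ?; [right | left]. Qed.

Lemma nonproportional_lin_indep2 u w : ~ proportional u w -> lin_indep2 u w.
Proof.
move=> npr a b uw0; have [a0|a_neq0] := eqVneq a 0.
  move: uw0; rewrite a0 scale0r add0r => bw0; split=> //.
  have [//|b_neq0] := eqVneq b 0; exfalso; apply: npr; right; exists 0.
  by rewrite -(scalerK b_neq0 w) bw0 scaler0 scale0r.
exfalso; apply: npr; left; exists (- (b / a)).
rewrite -(scalerK a_neq0 u); move/eqP: uw0; rewrite addr_eq0 => /eqP ->.
by rewrite scalerN scalerA mulrC scaleNr.
Qed.

Lemma proportional_scale_nz u w : proportional u w -> w != 0 ->
  exists a : K, u = a *: w.
Proof.
case=> [[a ->] _|[a w_def] w_neq0]; first by exists a.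
have a_neq0 : a != 0 by apply: contraNneq w_neq0 => a0; rewrite w_def a0 scale0r.
by exists a^-1; rewrite w_def scalerK.
Qed.

Lemma proportional_common_eq0 u v w :
  ~ proportional u v -> proportional u w -> proportional v w -> w = 0.
Proof.
move=> npr puw pvw; have [//|w_neq0] := eqVneq w 0; exfalso; apply: npr.
have [a u_def] := proportional_scale_nz puw w_neq0.
have [b v_def] := proportional_scale_nz pvw w_neq0.
have [a0|a_neq0] := eqVneq a 0.
  by left; exists 0; rewrite u_def a0 !scale0r.
by right; exists (b / a); rewrite v_def u_def scalerA divfK.
Qed.

End Proportional.

Section Multilinear.
Variables (K : fieldType) (m : nat) (Vs : 'I_m -> lmodType K) (V : lmodType K).
Variables (f : (forall i, Vs i) -> V) (f_ml : multilinear f).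
Implicit Types x y z : forall i, Vs i.

Definition differ x y : {set 'I_m} := [set j | x j != y j].

Lemma dfwith_id x i : dfwith x (x i) = x.
Proof. by apply: functional_extensionality_dep => j; case: dfwithP. Qed.

Lemma differ0_eq x y : differ x y = set0 -> x = y.
Proof.
move=> d0; apply: functional_extensionality_dep => j; apply/eqP.
by have := in_set0 j; rewrite -d0 inE => /negbFE.
Qed.

Lemma differ_dfwith x y i (u : Vs i) :
  differ (dfwith x u) (dfwith y u) \subset differ x y :\ i.
Proof.
apply/subsetP => j; rewrite !inE.
have [<-|ij] := eqVneq i j; first by rewrite !dfwith_in eqxx.
by rewrite !dfwith_out // eq_sym ij.
Qed.

Lemma multilinear_dfwithD z i (u v : Vs i) :
  f (dfwith z (u + v)) = f (dfwith z u) + f (dfwith z v).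
Proof. by have := f_ml z 1 u v; rewrite !scale1r. Qed.

Lemma multilinear_dfwith0 z i : f (dfwith z (0 : Vs i)) = 0.
Proof.
have := multilinear_dfwithD z (0 : Vs i) 0.
by rewrite addr0 => /esym/eqP; rewrite -subr_eq0 addrK => /eqP.
Qed.

Lemma multilinear_dfwith_lincomb z i a b (s t : Vs i) :
  f (dfwith z (a *: s + b *: t)) = a *: f (dfwith z s) + b *: f (dfwith z t).
Proof.
by rewrite f_ml -[b *: t]addr0 f_ml multilinear_dfwith0 !addr0.
Qed.

Lemma slice_contains_2dim z i (s t : Vs i) :
  ~ proportional (f (dfwith z s)) (f (dfwith z t)) -> contains_2dim_subspace f.
Proof.
move=> npr; exists (f (dfwith z s)), (f (dfwith z t)).
split; first exact: nonproportional_lin_indep2.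
by move=> a b; exists (dfwith z (a *: s + b *: t)); exact: multilinear_dfwith_lincomb.
Qed.

Lemma contains_2dim_or_differ_subset x y i :
  ~ proportional (f x) (f y) ->
  contains_2dim_subspace f \/ exists x' y',
    differ x' y' \subset differ x y :\ i /\ ~ proportional (f x') (f y').
Proof.
move=> npr; set x' := dfwith x (y i); set y' := dfwith y (x i).
have [px'|npx'] := classic (proportional (f x) (f x')); last first.
  by left; apply: (@slice_contains_2dim x i (x i) (y i)); rewrite dfwith_id.
have [py'|npy'] := classic (proportional (f y) (f y')); last first.
  by left; apply: (@slice_contains_2dim y i (y i) (x i)); rewrite dfwith_id.
have [px'y|npx'y] := classic (proportional (f x') (f y)); last first.
  by right; exists x', y; split=> //; have := differ_dfwith x y (y i); rewrite dfwith_id.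
have [pxy'|npxy'] := classic (proportional (f x) (f y')); last first.
  by right; exists x, y'; split=> //; have := differ_dfwith x y (x i); rewrite dfwith_id.
have fx'0 := proportional_common_eq0 npr px' (proportional_sym px'y).
have fy'0 := proportional_common_eq0 npr pxy' py'.
right; exists (dfwith x (x i + y i)), (dfwith y (x i + y i)).
split; first exact: differ_dfwith.
by rewrite !multilinear_dfwithD !dfwith_id -/x' -/y' fx'0 fy'0 addr0 add0r.
Qed.

Lemma nonproportional_differ x y :
  ~ proportional (f x) (f y) -> exists i, i \in differ x y.
Proof.
move=> npr; have [d0|[i di]] := set_0Vmem (differ x y); last by exists i.
by case: npr; rewrite (differ0_eq d0); exact: proportional_refl.
Qed.

Lemma nonproportional_images_contains_2dim x y :
  ~ proportional (f x) (f y) -> contains_2dim_subspace f.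
Proof.
move: {2}#|differ x y| (erefl #|differ x y|) => n.
elim/ltn_ind: n x y => n IHn x y size_d npr.
have [i di] := nonproportional_differ npr.
have [//|[x' [y' [sub_d npr']]]] := contains_2dim_or_differ_subset i npr.
apply: (IHn _ _ x' y' (erefl _) npr'); rewrite -size_d.
by apply: leq_ltn_trans (subset_leq_card sub_d) _; rewrite (cardsD1 i (differ x y)) di.
Qed.

End Multilinear.

Lemma lin_indep2_spans_dim2 (K : fieldType) (V : vectType K) (u w : V) :
  \dim (fullv : {vspace V}) = 2%N -> lin_indep2 u w ->
  forall v, exists a b : K, v = a *: u + b *: w.
Proof.
move=> dimV uw v.
have w_neq0 : w != 0.
  apply/eqP => w0; case: (uw 0 1) => [|_ /eqP]; last by rewrite oner_eq0.
  by rewrite w0 scaler0 scale0r addr0.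
have u_notin_w : u \notin <[w]>%VS.
  apply/negP => /vlineP [k u_def]; case: (uw 1 (- k)) => [|/eqP]; last by rewrite oner_eq0.
  by rewrite u_def scale1r scaleNr subrr.
have free_uw : free [:: u; w] by rewrite free_cons span_seq1 u_notin_w seq1_free.
have span_uw : <<[:: u; w]>>%VS = fullv.
  by apply/eqP; rewrite eqEdim subvf /= dimV (eqP free_uw).
have : v \in <<[:: u; w]>>%VS by rewrite span_uw memvf.
rewrite span_cons span_seq1 => /memv_addP [_ /vlineP [a ->] [_ /vlineP [b ->] ->]].
by exists a, b.
Qed.

Theorem lemma1p31 :
  (forall (K : fieldType) (m : nat) (Vs : 'I_m -> lmodType K)
      (V : lmodType K) (f : (forall i, Vs i) -> V),
    multilinear f ->
    (exists v w : V, in_image f v /\ in_image f w /\ ~ proportional v w) ->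
    contains_2dim_subspace f)
  /\
  (forall (K : fieldType) (m : nat) (Vs : 'I_m -> lmodType K)
      (V : vectType K) (f : (forall i, Vs i) -> V),
    multilinear f ->
    (exists v w : V, in_image f v /\ in_image f w /\ ~ proportional v w) ->
    \dim (fullv : {vspace V}) = 2%N ->
    forall v : V, in_image f v).
Proof.
split=> [K m Vs V f f_ml | K m Vs V f f_ml] [_ [_ [[x <-] [[y <-] npr]]]].
  exact: (nonproportional_images_contains_2dim f_ml npr).
move=> dimV v.
have [u [w [uw img]]] := nonproportional_images_contains_2dim f_ml npr.
have [a [b ->]] := lin_indep2_spans_dim2 dimV uw v.
exact: img.
Qed.
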